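(* Let $X$ be a homogeneous space with the Baire property and $\chi(X)\le\aleph_0$. If there is a continuous transitive action of an $\omega$-narrow group on $X$, then $X$ is separable and metrizable.
   Context: All spaces are Tychonoff. $X$ is homogeneous if for any $x,y\in X$ there is a homeomorphism $h$ of $X$ with $h(x)=y$. A topological group $G$ is $\omega$-narrow if for every neighborhood $U$ of the unit there is a countable $A\subset G$ with $AU=G$. *)

From HB Require Import structures.
From mathcomp Require Import all_boot all_order all_algebra.
From mathcomp Require Import all_classical all_reals all_analysis.
From mathcomp Require Import Rstruct Rstruct_topology.
From Stdlib Require Import Rdefinitions.

Set Implicit Arguments.
Unset Strict Implicit.
Unset Printing Implicit Defensive.
Import Order.TTheory GRing.Theory Num.Theory.

Local Open Scope classical_set_scope.
Local Open Scope ring_scope.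

Definition tychonoff_space (X : topologicalType) : Prop :=
  accessible_space X /\
  forall (x : X) (B : set X), closed B -> ~ B x ->
    exists f : X -> Rdefinitions.R,
      continuous f /\ f x = 0 /\ (forall y, B y -> f y = 1).

Definition homeomorphism (X : topologicalType) (h : X -> X) : Prop :=
  exists g : X -> X, [/\ cancel h g, cancel g h, continuous h & continuous g].

Definition homogeneous (X : topologicalType) : Prop :=
  forall x y : X, exists h : X -> X, homeomorphism h /\ h x = y.

Definition baire_property (X : topologicalType) : Prop :=
  forall F : nat -> set X, (forall n, open (F n) /\ dense (F n)) ->
    dense (\bigcap_n F n).

Definition countable_character (X : topologicalType) : Prop :=
  forall x : X, exists B : set (set X),
    [/\ countable B,
        (forall b, B b -> open b /\ b x) &
        (forall U, nbhs x U -> exists2 b, B b & b `<=` U)].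

Definition separable (X : topologicalType) : Prop :=
  exists D : set X, countable D /\ dense D.

Definition metrizable (X : topologicalType) : Prop :=
  exists d : X -> X -> Rdefinitions.R,
    [/\ (forall x y, 0 <= d x y),
        (forall x y, d x y = 0 <-> x = y),
        (forall x y, d x y = d y x),
        (forall x y z, d x z <= d x y + d y z) &
        (forall U : set X, open U <->
           (forall x, U x -> exists2 eps : Rdefinitions.R, 0 < eps &
                [set y | d x y < eps] `<=` U))].

Definition topological_group (G : topologicalType)
    (mul : G -> G -> G) (inv : G -> G) (e : G) : Prop :=
  [/\ (forall x y z, mul x (mul y z) = mul (mul x y) z),
      (forall x, mul e x = x /\ mul x e = x),
      (forall x, mul (inv x) x = e /\ mul x (inv x) = e),
      continuous (fun p : G * G => mul p.1 p.2) &
      continuous inv].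

Definition omega_narrow (G : topologicalType)
    (mul : G -> G -> G) (e : G) : Prop :=
  forall U : set G, nbhs e U ->
    exists A : set G, countable A /\
      forall g : G, exists a u, [/\ A a, U u & g = mul a u].

Definition continuous_action (G X : topologicalType)
    (mul : G -> G -> G) (e : G) (act : G -> X -> X) : Prop :=
  [/\ (forall x, act e x = x),
      (forall g h x, act (mul g h) x = act g (act h x)) &
      continuous (fun p : G * X => act p.1 p.2)].

Definition transitive_action (G X : Type) (act : G -> X -> X) : Prop :=
  forall x y : X, exists g : G, act g x = y.

(* Let an omega-narrow group G act continuously and transitively on X, and let
   B be a countable local base at x0.  For b in B, continuity of the action at
   (e, x0) gives an open V ∋ x0 and a neighbourhood W of e with W x0 ⊆ V and
   W^-1 V ⊆ b; choosing a countable A with A W = G, every g x0 lies in some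
   a V with a ∈ A and a V ⊆ g b.  Hence the countably many translates a V form
   a base of X, so X is separable, and, being Tychonoff, metrizable by
   Urysohn's argument: the base yields countably many continuous f_n
   separating points from closed sets, and
   d(x, y) = sup_n min(|f_n x - f_n y|, 1/(n+1)) is a compatible metric. *)

From mathcomp Require Import all_boot all_order all_algebra.
From mathcomp Require Import all_classical all_reals all_analysis.
From mathcomp Require Import Rstruct Rstruct_topology.
From Stdlib Require Import Rdefinitions.
From mathcomp Require Import lra.

Set Implicit Arguments.
Unset Strict Implicit.
Unset Printing Implicit Defensive.
Import Order.TTheory GRing.Theory Num.Theory.

Local Open Scope classical_set_scope.
Local Open Scope ring_scope.

Lemma countable_set0_or_range T (A : set T) :
  countable A -> A = set0 \/ exists f : nat -> T, A = range f.
Proof. by move=> /pfcard_geP[->|/surjfunPex[f ->]]; [left | right; exists f]. Qed.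

Lemma min_subadd (K : realDomainType) (a b c : K) : 0 <= a -> 0 <= b -> 0 <= c ->
  Num.min (a + b) c <= Num.min a c + Num.min b c.
Proof.
move=> a0 b0 c0; rewrite ge_min.
case: (leP a c) => ac; case: (leP b c) => bc; apply/orP; [left | right..]; lra.
Qed.

Definition separates_points_from_closed (X : topologicalType) (F : nat -> X -> R) :=
  forall x V, nbhs x V -> exists n, F n x < 2^-1 /\ forall y, ~ V y -> F n y = 1.

Section SupDistance.
Variables (X : topologicalType) (F : nat -> X -> R).

Definition coord_dist n (x y : X) : R := Num.min `|F n x - F n y| n.+1%:R^-1.

Definition sup_dist (x y : X) : R := sup (range (fun n => coord_dist n x y)).

Lemma coord_dist_ge0 n x y : 0 <= coord_dist n x y.
Proof. by rewrite le_min normr_ge0 invr_ge0 ler0n. Qed.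

Lemma coord_dist_le_inv n x y : coord_dist n x y <= n.+1%:R^-1.
Proof. by rewrite ge_min lexx orbT. Qed.

Lemma coord_dist_le_norm n x y : coord_dist n x y <= `|F n x - F n y|.
Proof. by rewrite ge_min lexx. Qed.

Lemma coord_distC n x y : coord_dist n x y = coord_dist n y x.
Proof. by rewrite /coord_dist distrC. Qed.

Lemma coord_dist_triangle n x y z :
  coord_dist n x z <= coord_dist n x y + coord_dist n y z.
Proof.
have w0 : 0 <= n.+1%:R^-1 :> R by rewrite invr_ge0 ler0n.
apply: le_trans (min_subadd (normr_ge0 _) (normr_ge0 _) w0).
exact: le_min2 (ler_distD _ _ _) (lexx _).
Qed.

Lemma coord_dist_le_sup n x y : coord_dist n x y <= sup_dist x y.
Proof.
apply: ub_le_sup; last by exists n.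
exists 1 => _ [m _ <-]; apply: le_trans (coord_dist_le_inv m x y) _.
by rewrite invf_le1 ?ler1n.
Qed.

Lemma sup_dist_le x y c : (forall n, coord_dist n x y <= c) -> sup_dist x y <= c.
Proof. by move=> le_c; apply: ge_sup => [|_ [n _ <-]]; [exists (coord_dist 0 x y), 0%N|]. Qed.

Lemma sup_dist_ge0 x y : 0 <= sup_dist x y.
Proof. exact: le_trans (coord_dist_ge0 0 x y) (coord_dist_le_sup 0 x y). Qed.

Lemma sup_dist_xx x : sup_dist x x = 0.
Proof.
apply/le_anti; rewrite sup_dist_ge0 andbT.
by apply: sup_dist_le => n; rewrite /coord_dist subrr normr0 ge_min lexx.
Qed.

Lemma sup_distC x y : sup_dist x y = sup_dist y x.
Proof.
by apply/le_anti/andP; split; apply: sup_dist_le => n; rewrite coord_distC coord_dist_le_sup.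
Qed.

Lemma sup_dist_triangle x y z : sup_dist x z <= sup_dist x y + sup_dist y z.
Proof.
apply: sup_dist_le => n; apply: le_trans (coord_dist_triangle n x y z) _.
by apply: lerD; apply: coord_dist_le_sup.
Qed.

Hypotheses (F_cont : forall n, continuous (F n))
  (F_sep : separates_points_from_closed F).

Lemma sup_dist_away x V : nbhs x V ->
  exists2 eps, 0 < eps & forall y, ~ V y -> eps <= sup_dist x y.
Proof.
move=> /F_sep[n [Fx FV]]; exists (Num.min 2^-1 n.+1%:R^-1).
  by rewrite lt_min invr_gt0 ltr0n; apply/andP; split => //; lra.
move=> y /FV Fy; apply: le_trans (coord_dist_le_sup n x y).
apply: le_min2 => //; rewrite Fy distrC; apply: le_trans (ler_norm _); lra.
Qed.

Lemma nbhs_sup_dist_lt x eps : 0 < eps -> nbhs x [set y | sup_dist x y < eps].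
Proof.
(* The first N+1 coordinates are controlled by continuity, the others by their
   weights 1/(n+1) < eps/2. *)
move=> eps0; have eps20 : 0 < eps / 2 by lra.
have [N _ /(_ N (leqnn N)) /= small_tail] := near_infty_natSinv_lt (PosNum eps20).
have close_head : nbhs x [set y | forall i : 'I_N.+1, `|F i x - F i y| < eps / 2].
  apply: (@filter_forall _ _ (fun (i : 'I_N.+1) y => `|F i x - F i y| < eps / 2)
    _ (nbhs_filter x)) => i.
  exact: F_cont (nbhsx_ballx (F i x) _ eps20).
apply: filterS close_head => y close_y /=; apply: le_lt_trans (_ : eps / 2 < eps); last lra.
apply: sup_dist_le => n; case: (leqP n N) => [le_nN | lt_Nn].
  apply/ltW/(le_lt_trans (coord_dist_le_norm n x y)).
  exact: close_y (@Ordinal N.+1 n le_nN).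
apply: le_trans (coord_dist_le_inv n x y) (ltW (le_lt_trans _ small_tail)).
by rewrite lef_pV2 ?posrE ?ltr0n // ler_nat ltnW.
Qed.

Lemma separating_family_metrizable : accessible_space X -> metrizable X.
Proof.
move=> T1; exists sup_dist; split.
- exact: sup_dist_ge0.
- move=> x y; split => [dxy|<-]; last exact: sup_dist_xx.
  case: (eqVneq x y) => // /T1[A [oA /set_mem Ax /set_mem Ay]].
  have [eps eps0 far] := sup_dist_away (open_nbhs_nbhs (conj oA Ax)).
  by have := far y Ay; rewrite dxy leNgt eps0.
- exact: sup_distC.
- exact: sup_dist_triangle.
- move=> U; split => [oU x Ux | ballU].
    have [eps eps0 far] := sup_dist_away (open_nbhs_nbhs (conj oU Ux)).
    by exists eps => // y /= dxy; apply/not_notP => /far; lra.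
  rewrite openE => x /ballU[eps eps0 ballU_x].
  exact: filterS ballU_x (nbhs_sup_dist_lt x eps0).
Qed.

End SupDistance.

Definition separating_function (X : topologicalType) (U V : set X) (f : X -> R) :=
  [/\ continuous f, forall y, U y -> f y < 2^-1 & forall y, ~ V y -> f y = 1].

Lemma tychonoff_base_separating (X : topologicalType) (C : nat -> set X) :
  tychonoff_space X -> (forall n, open (C n)) ->
  (forall x V, nbhs x V -> exists n, C n x /\ C n `<=` V) ->
  exists F : nat -> X -> R,
    (forall n, continuous (F n)) /\ separates_points_from_closed F.
Proof.
move=> [_ tych] oC base.
pose admissible o (h : X -> R) := continuous h /\ forall k l, o = Some (k, l) ->
  (exists f, separating_function (C k) (C l) f) -> separating_function (C k) (C l) h.
have [H HP] : {H : option (nat * nat) -> X -> R & forall o, admissible o (H o)}.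
  apply: choice => -[[k l]|]; last first.
    by exists (fun _ => 0); split => [|k l //]; exact: cst_continuous.
  have [[f sepf]|nsep] := pselect (exists f, separating_function (C k) (C l) f).
    by exists f; split => [|k' l' [<- <-] //]; case: sepf.
  by exists (fun _ => 0); split => [|k' l' [<- <-] /nsep //]; exact: cst_continuous.
exists (H \o unpickle); split => [n|x V xV]; first exact: (HP _).1.
have [l [Clx ClV]] := base x V xV.
have [f [cf [fx f1]]] := tych x (~` C l) (open_closedC (oC l)) (fun nC => nC Clx).
have f_small : nbhs x [set y | f y < 2^-1].
  have half_nbhs : nbhs (f x) [set r : R | r < 2^-1].
    apply: open_nbhs_nbhs; split; first exact: open_lt.
    by rewrite /= fx invr_gt0 ltr0n.
  exact: cf x _ half_nbhs.
have [k [Ckx Ck_small]] := base x _ f_small.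
have [_ Hlt Heq] : separating_function (C k) (C l) (H (Some (k, l))).
  by apply: (HP _).2 => //; exists f.
exists (pickle (k, l)); rewrite /= pickleK; split; first exact: Hlt.
by move=> y nVy; apply: Heq => /ClV.
Qed.

Lemma second_countable_nat_base (X : topologicalType) : @second_countable X ->
  exists C : nat -> set X,
    (forall n, open (C n)) /\ forall x V, nbhs x V -> exists n, C n x /\ C n `<=` V.
Proof.
case=> B /countable_set0_or_range[-> [_ base] | [C ->] [oB base]].
  by exists (fun _ => set0); split => [_|x V /base[U [[] _]]]; first exact: open0.
exists C; split => [n|x V /base[_ [[n _ <-] Cnx] CnV]]; last by exists n.
by apply: oB; exists n.
Qed.

Lemma tychonoff_second_countable_metrizable (X : topologicalType) :
  tychonoff_space X -> @second_countable X -> metrizable X.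
Proof.
move=> tychX /second_countable_nat_base[C [oC base]].
have [F [F_cont F_sep]] := tychonoff_base_separating tychX oC base.
exact: separating_family_metrizable F_cont F_sep tychX.1.
Qed.

Lemma second_countable_separable (X : topologicalType) :
  @second_countable X -> separable X.
Proof.
case=> B cB [_ base].
have [[x0 _]|X0] := pselect (exists x : X, True); last first.
  by exists set0; split => // O [x _]; case: X0; exists x.
exists (xget x0 @` B); split; first exact: sub_countable (card_image_le _ _) cB.
move=> O [x Ox] oO; have [U [BU Ux] UO] := base x O (open_nbhs_nbhs (conj oO Ox)).
have Ux0 : U (xget x0 U) by apply: xgetPex; exists x.
by exists (xget x0 U); split; [apply: UO | exists U].
Qed.

Section OmegaNarrowAction.
Variables (G X : topologicalType) (mul : G -> G -> G) (inv : G -> G) (e : G)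
  (act : G -> X -> X).
Hypotheses (topG : topological_group mul inv e)
  (actG : continuous_action mul e act).

Lemma act1 x : act e x = x.
Proof. by case: actG. Qed.

Lemma actM g h x : act (mul g h) x = act g (act h x).
Proof. by case: actG. Qed.

Lemma inv_unit : inv e = e.
Proof. by case: topG => _ unit invK _ _; rewrite -[inv e](unit _).2 (invK e).1. Qed.

Lemma actK g : cancel (act g) (act (inv g)).
Proof. by case: topG => _ _ invK _ _ y; rewrite -actM (invK g).1 act1. Qed.

Lemma actVK g : cancel (act (inv g)) (act g).
Proof. by case: topG => _ _ invK _ _ y; rewrite -actM (invK g).2 act1. Qed.

Lemma nbhs_act g y W : nbhs (act g y) W ->
  exists2 P, nbhs g P & exists2 Q, nbhs y Q & forall h z, P h -> Q z -> W (act h z).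
Proof.
case: actG => _ _ act_cont /(act_cont (g, y))[[P Q] /= [Pg Qy] PQW].
by exists P => //; exists Q => // h z Ph Qz; apply: (PQW (h, z)).
Qed.

Lemma act_continuous g : continuous (act g).
Proof.
move=> y W /nbhs_act[P /nbhs_singleton Pg [Q Qy PQW]].
by apply: filterS Qy => z; apply: PQW.
Qed.

Lemma act_orbit_continuous y : continuous (act^~ y).
Proof.
move=> g W /nbhs_act[P Pg [Q /nbhs_singleton Qy PQW]].
by apply: filterS Pg => h Ph; apply: PQW.
Qed.

Hypothesis narrowG : omega_narrow mul e.

Lemma omega_narrow_act_cover x0 b : nbhs x0 b ->
  exists2 V : set X, open_nbhs x0 V & exists2 A : set G, countable A &
    forall g, exists a u, [/\ A a, g = mul a u, V (act u x0) &
                              V `<=` act (inv u) @^-1` b].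
Proof.
move=> x0b; have [P Pe [Q Qx0 PQb]] : exists2 P, nbhs e P &
    exists2 Q, nbhs x0 Q & forall h z, P h -> Q z -> b (act h z).
  by apply: nbhs_act; rewrite act1.
have [V x0V VQ] : exists2 V, open_nbhs x0 V & V `<=` Q by rewrite nbhsE in Qx0.
have Pinv : nbhs e [set u | P (inv u)].
  by case: topG => _ _ _ _ inv_cont; apply: inv_cont; rewrite inv_unit.
have Vx0 : nbhs e [set u | V (act u x0)].
  by apply: act_orbit_continuous; rewrite act1; apply: open_nbhs_nbhs.
have [A [cA AG]] := narrowG (filterI Pinv Vx0).
exists V => //; exists A => // g; have [a [u [Aa [Pu Vu] ->]]] := AG g.
by exists a, u; split => // z /VQ Qz; apply: PQb.
Qed.

Hypothesis transG : transitive_action act.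

Lemma omega_narrow_transitive_second_countable :
  countable_character X -> @second_countable X.
Proof.
move=> chiX; have [[x0 _]|X0] := pselect (exists x : X, True); last first.
  by exists set0 => //; split => // x; case: X0; exists x.
have [B [cB Bx0 Bbase]] := chiX x0.
pose covers b (VA : set X * set G) := B b ->
  [/\ open_nbhs x0 VA.1, countable VA.2 & forall g, exists a u,
    [/\ VA.2 a, g = mul a u, VA.1 (act u x0) & VA.1 `<=` act (inv u) @^-1` b]].
have [cover coverP] : {cover : set X -> set X * set G & forall b, covers b (cover b)}.
  apply: choice => b; have [Bb|nBb] := pselect (B b); last first.
    by exists (set0, set0); move=> /nBb.
  have [V x0V [A cA AG]] := omega_narrow_act_cover (open_nbhs_nbhs (Bx0 b Bb)).
  by exists (V, A).
exists (\bigcup_(b in B) [set act (inv a) @^-1` (cover b).1 | a in (cover b).2]).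
  apply: (bigcup_countable cB) => b /coverP[_ cA _].
  exact: sub_countable (card_image_le _ _) cA.
split.
  move=> _ [b /coverP[[oV _] _ _] [a _ <-]].
  by apply: open_comp oV => y _; apply: act_continuous.
move=> x W xW; have [g gx] := transG x0 x.
have gx0W : nbhs (act g x0) W by rewrite gx.
have [b Bb bW] := Bbase _ (act_continuous gx0W).
have [_ _ /(_ g)[a [u [Aa gE Vu Vb]]]] := coverP b Bb.
exists (act (inv a) @^-1` (cover b).1).
  split; first by exists b => //; exists a.
  by rewrite /= -gx gE actM actK.
by move=> y /Vb /bW /=; rewrite gE actM !actVK.
Qed.

End OmegaNarrowAction.

Theorem corollary4p12 (X : topologicalType)
  (tychX : tychonoff_space X) (homX : homogeneous X) (baireX : baire_property X)
  (chiX : countable_character X)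
  (G : topologicalType) (mul : G -> G -> G) (inv : G -> G) (e : G)
  (tychG : tychonoff_space G) (topG : topological_group mul inv e)
  (narrowG : omega_narrow mul e)
  (act : G -> X -> X) (contact : continuous_action mul e act)
  (transact : transitive_action act) :
  separable X /\ metrizable X.
Proof.
have X_second_countable : @second_countable X :=
  omega_narrow_transitive_second_countable topG contact narrowG transact chiX.
split; first exact: second_countable_separable.
exact: tychonoff_second_countable_metrizable.
Qed.
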